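(* Let $n\geq1$. For all $m\in\mathbb N$, $\overline{(m,m)}\in\mathrm{span}_{\mathbb C}\{\overline{(1,1)},\overline{(2,2)},\ldots,\overline{(n,n)}\}$.
   Context: $\Lambda_{2,n}=\{\alpha\in\mathbb N^2:1\leq\alpha_1+\alpha_2\leq n\}$, $\lambda_{2,n}=|\Lambda_{2,n}|$, and for $v\in\mathbb N^2$, $\bar v=\big(\binom{v_1}{\alpha_1}\binom{v_2}{\alpha_2}\big)_{\alpha\in\Lambda_{2,n}}\in\mathbb C^{\lambda_{2,n}}$. *)

From HB Require Import structures.
From mathcomp Require Import all_boot all_order all_algebra.
From mathcomp Require Import reals.
From mathcomp Require Export complex.
Set Implicit Arguments. Unset Strict Implicit. Unset Printing Implicit Defensive.
Import GRing.Theory.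
Local Open Scope ring_scope.

Definition inLambda (n : nat) (a : nat * nat) : bool := (1 <= a.1 + a.2 <= n)%N.

(* the alpha-coordinate of bar v : binom(v1,alpha1) * binom(v2,alpha2), in a ring C *)
Definition vbar (C : nzRingType) (v a : nat * nat) : C :=
  ('C(v.1, a.1) * 'C(v.2, a.2))%:R.

From HB Require Import structures.
From mathcomp Require Import all_boot all_order all_algebra.
From mathcomp Require Import reals complex zify.
Local Open Scope ring_scope.
Local Open Scope complex_scope.
Import GRing.Theory.

(* The product C(m,a) C(m,b) is a combination of the C(m,j), 1 <= j <= a+b,
   with coefficients that do not depend on m.  Hence it suffices to show that
   the vector (C(m,j))_{1<=j<=n} is a combination of the vectors
   (C(k,j))_{1<=j<=n}, k = 1..n, which holds because the matrix
   (C(k,j))_{1<=k,j<=n} is unitriangular. *)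

Lemma ffactD m a i : (m ^_ (a + i) = m ^_ a * (m - a) ^_ i)%N.
Proof.
elim: i => [|i IHi]; first by rewrite addn0 ffactn0 muln1.
by rewrite addnS !ffactnSr IHi subnDA mulnA.
Qed.

Lemma mul_bin_sub m a i :
  ('C(m, a) * 'C(m - a, i) = 'C(m, a + i) * 'C(a + i, a))%N.
Proof.
apply/eqP; rewrite -(@eqn_pmul2r (a`! * i`!)) ?muln_gt0 ?fact_gt0 //.
have binaiE : ('C(a + i, a) * (a`! * i`!) = (a + i)`!)%N.
  by have := bin_fact (leq_addr i a); rewrite addKn.
by rewrite mulnACA !bin_ffact -mulnA binaiE bin_ffact ffactD.
Qed.

Lemma mul_bin_expand m a b :
  ('C(m, a) * 'C(m, b) =
   \sum_(i < b.+1) 'C(m, a + i) * ('C(a + i, a) * 'C(a, b - i)))%N.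
Proof.
have [a_le_m | m_lt_a] := leqP a m; last first.
  rewrite bin_small // mul0n big1 // => i _.
  by rewrite bin_small ?mul0n // (leq_trans m_lt_a) ?leq_addr.
rewrite -{2}(subnK a_le_m) -binomial.Vandermonde big_distrr /=.
by apply: eq_bigr => i _; rewrite mulnA mul_bin_sub mulnA.
Qed.

Section BinomialRows.

Variable R : comUnitRingType.

Lemma binomial_unitmx n :
  (\matrix_(k < n, j < n) ('C(k.+1, j.+1))%:R : 'M[R]_n) \in unitmx.
Proof.
rewrite unitmxE det_trig; last by apply/is_trig_mxP => k j ltkj; rewrite mxE bin_small.
by rewrite big1 ?unitr1 // => k _; rewrite mxE binn.
Qed.

Lemma binomial_row_span n m :
  exists c : 'I_n -> R, forall j, (0 < j <= n)%N ->
    ('C(m, j))%:R = \sum_(k < n) c k * ('C(k.+1, j))%:R.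
Proof.
pose M : 'M[R]_n := \matrix_(k, j) ('C(k.+1, j.+1))%:R.
pose u : 'rV[R]_n := \row_j ('C(m, j.+1))%:R.
exists (fun k => (u *m invmx M) 0 k) => -[//|j] /= ltjn.
have := congr1 (fun v : 'rV_n => v 0 (Ordinal ltjn)) (mulmxKV (binomial_unitmx n) u).
by rewrite !mxE => <-; apply: eq_bigr => k _; rewrite !mxE.
Qed.

End BinomialRows.

Theorem lemma2p11 (R : realType) (n : nat) (hn : (1 <= n)%N) (m : nat) :
  exists c : 'I_n -> R[i],
    forall a : nat * nat, inLambda n a ->
      vbar (R[i]) (m, m) a = \sum_(k < n) c k * vbar (R[i]) (k.+1, k.+1) a.
Proof.
have [c cE] := binomial_row_span R[i] n m.
exists c => -[a b] /andP[/= ab_gt0 ab_le_n].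
rewrite /vbar /= mul_bin_expand natr_sum.
under [RHS]eq_bigr => k _ do rewrite mul_bin_expand natr_sum mulr_sumr.
rewrite exchange_big /=; apply: eq_bigr => i _.
under eq_bigr do rewrite natrM mulrA.
rewrite -mulr_suml natrM.
have [ai0 | ai_gt0] := posnP (a + i).
  by rewrite (@bin_small a (b - i)) ?muln0 ?mulr0 //; lia.
by rewrite -cE // ai_gt0 (leq_trans _ ab_le_n) // leq_add2l -ltnS ltn_ord.
Qed.
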